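(* Let $\kappa$ be an infinite cardinal and let $\langle\kappa\times\kappa^{++},\unlhd\rangle$ be a $(\kappa,\kappa^{++})$-admissible poset. For $(\alpha,\beta)\in\kappa\times\kappa^{++}$ put $C(\alpha,\beta)=\{(\gamma,\delta)\in\kappa\times\kappa^{++}:(\gamma,\delta)\unlhd(\alpha,\beta)\}$, and give $X=\kappa\times\kappa^{++}$ the topology generated by the subbase consisting of all sets $C(\alpha,\beta)$ and their complements $X\setminus C(\alpha,\beta)$. Then $X$ is Hausdorff, every $C(\alpha,\beta)$ is compact (so $X$ is a locally compact Hausdorff space), and $I_\beta(X)=\kappa\times\{\beta\}$ for every $\beta<\kappa^{++}$. In particular $X$ is a locally compact Hausdorff scattered space of height $\kappa^{++}$ whose cardinal sequence is constantly $\kappa$.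
   Context: $(\kappa,\kappa^{++})$-admissible: $\unlhd$ is a reflexive, transitive, antisymmetric relation on $\kappa\times\kappa^{++}$ such that (A) $(\alpha,\beta)\unlhd(\alpha',\beta')$ with $(\alpha,\beta)\neq(\alpha',\beta')$ implies $\beta<\beta'$; (B) for every $\beta<\kappa^{++}$ and $(\alpha',\beta')$ with $\beta<\beta'$ there are infinitely many $\alpha$ with $(\alpha,\beta)\unlhd(\alpha',\beta')$; (C) for any two points $x_0,x_1$ there is a finite set $b$ of points each $\unlhd$-below both $x_0,x_1$ such that every point $\unlhd$-below both $x_0,x_1$ is $\unlhd$-below some element of $b$. Cantor–Bendixson levels: $I_0(X)$ is the set of isolated points of $X$, and $I_\beta(X)$ is the set of isolated points of the subspace $X\setminus\bigcup_{\alpha<\beta}I_\alpha(X)$. $X$ is scattered if $X=\bigcup_{\beta<\lambda}I_\beta(X)$ where $\lambda$ is the least ordinal with $I_\lambda(X)=\emptyset$ (the height); the cardinal sequence is $\langle|I_\beta(X)|:\beta<\lambda\rangle$. *)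

(* sets are predicates, cardinalities are compared via injections. *)
From Stdlib Require Import List Classical.
Import ListNotations.
Set Implicit Arguments.

Definition inj_le (A B : Type) : Prop :=
  exists f : A -> B, forall x y, f x = f y -> x = y.

Definition same_card (A B : Type) : Prop :=
  exists (f : A -> B) (g : B -> A),
    (forall a, g (f a) = a) /\ (forall b, f (g b) = b).

(** |B| is the successor cardinal of |A|: |A| < |B| and every subset of B has
    cardinality <= |A| or = |B|. *)
Definition succ_card (A B : Type) : Prop :=
  inj_le A B /\ ~ inj_le B A /\
  forall P : B -> Prop, inj_le {x : B | P x} A \/ inj_le B {x : B | P x}.

Definition infinite_type (A : Type) : Prop := inj_le nat A.

Definition strict_well_order (L : Type) (lt : L -> L -> Prop) : Prop :=
  well_founded lt /\
  (forall x y z, lt x y -> lt y z -> lt x z) /\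
  (forall x y, lt x y \/ x = y \/ lt y x).

(** (L, lt) is (order-isomorphic to) the ordinal kappa^{++}, kappa = |K|:
    an initial ordinal (every proper initial segment is of smaller cardinality)
    whose cardinality is the second successor of |K|. *)
Definition is_kappa_pp (K L : Type) (lt : L -> L -> Prop) : Prop :=
  strict_well_order lt /\
  (forall x : L, ~ inj_le L {y : L | lt y x}) /\
  exists M : Type, succ_card K M /\ succ_card M L.

Definition admissible (K L : Type) (lt : L -> L -> Prop)
  (R : (K * L) -> (K * L) -> Prop) : Prop :=
  (forall x, R x x) /\
  (forall x y z, R x y -> R y z -> R x z) /\
  (forall x y, R x y -> R y x -> x = y) /\
  (forall x y, R x y -> x <> y -> lt (snd x) (snd y)) /\
  (* (B) *)
  (forall (b : L) (a' : K) (b' : L), lt b b' ->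
     forall l : list K, exists a : K, ~ In a l /\ R (a, b) (a', b')) /\
  (* (C) *)
  (forall x0 x1, exists bs : list (K * L),
     (forall y, In y bs -> R y x0 /\ R y x1) /\
     (forall z, R z x0 -> R z x1 -> exists y, In y bs /\ R z y)).

Definition gen_open (T : Type) (S : (T -> Prop) -> Prop) (U : T -> Prop) : Prop :=
  forall x, U x -> exists l : list (T -> Prop),
    (forall V, In V l -> S V) /\ (forall V, In V l -> V x) /\
    (forall y, (forall V, In V l -> V y) -> U y).

Definition hausdorff (T : Type) (opn : (T -> Prop) -> Prop) : Prop :=
  forall x y : T, x <> y -> exists U V,
    opn U /\ opn V /\ U x /\ V y /\ (forall z, ~ (U z /\ V z)).

Definition compact (T : Type) (opn : (T -> Prop) -> Prop) (A : T -> Prop) : Prop :=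
  forall Cov : (T -> Prop) -> Prop,
    (forall U, Cov U -> opn U) ->
    (forall x, A x -> exists U, Cov U /\ U x) ->
    exists l : list (T -> Prop),
      (forall U, In U l -> Cov U) /\ (forall x, A x -> exists U, In U l /\ U x).

Definition locally_compact (T : Type) (opn : (T -> Prop) -> Prop) : Prop :=
  forall x : T, exists U C, opn U /\ U x /\ (forall y, U y -> C y) /\ compact opn C.

Definition isolated_in (T : Type) (opn : (T -> Prop) -> Prop) (Y : T -> Prop) (x : T) : Prop :=
  Y x /\ exists U, opn U /\ U x /\ (forall y, U y -> Y y -> y = x).

Definition CB_levels (T L : Type) (opn : (T -> Prop) -> Prop) (lt : L -> L -> Prop)
  (I : L -> T -> Prop) : Prop :=
  forall b x, I b x <-> isolated_in opn (fun y => ~ exists a, lt a b /\ I a y) x.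

Definition Cdown (K L : Type) (R : (K * L) -> (K * L) -> Prop) (a : K) (b : L) : (K * L) -> Prop :=
  fun p => R p (a, b).

Definition adm_subbase (K L : Type) (R : (K * L) -> (K * L) -> Prop) (V : (K * L) -> Prop) : Prop :=
  exists a b, V = Cdown R a b \/ V = (fun p => ~ Cdown R a b p).

From Stdlib Require Import List Classical ProofIrrelevance.
Import ListNotations.
Set Implicit Arguments.

(* A basic open neighbourhood of x contains a set
   C(x) \ (C(d_1) u ... u C(d_n)) with every d_i strictly below x, by (C).
   Using (B) at a level above all the d_i and (C) again to push the finitely
   many constraints down, such a set meets every level below that of x; hence
   no point is isolated before its own level, while C(x) minus x, lying on
   lower levels, shows it is isolated at its level.  Compactness of C(x)
   follows by induction on the level of x: the member of a cover containing x
   swallows C(x) up to finitely many lower cones, which are compact. *)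

Lemma well_founded_irrefl (L : Type) (lt : L -> L -> Prop) :
  well_founded lt -> forall x, ~ lt x x.
Proof. intros Hwf x; induction (Hwf x) as [x _ IH]; intro H; exact (IH x H H). Qed.

Lemma list_max_total (L : Type) (lt : L -> L -> Prop)
  (lt_trans : forall x y z, lt x y -> lt y z -> lt x z)
  (lt_total : forall x y, lt x y \/ x = y \/ lt y x) (m0 : L) (ms : list L) :
  exists m, In m (m0 :: ms) /\ forall l, In l (m0 :: ms) -> l = m \/ lt l m.
Proof.
  induction ms as [|l0 ms IH].
  - exists m0; split; [now left|]. intros l [<-|[]]; now left.
  - destruct IH as [m [Hm Hmax]].
    destruct (lt_total l0 m) as [Hlt|[Heq|Hgt]].
    + exists m; split; [destruct Hm as [<-|Hm]; simpl; tauto|].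
      intros l [<-|[<-|Hl]]; [apply Hmax; now left|now right|apply Hmax; now right].
    + exists m; split; [destruct Hm as [<-|Hm]; simpl; tauto|].
      intros l [<-|[<-|Hl]]; [apply Hmax; now left|now left|apply Hmax; now right].
    + exists l0; split; [simpl; tauto|].
      intros l Hl; destruct (classic (l = l0)) as [->|Hne]; [now left|right].
      assert (Hl' : In l (m0 :: ms)) by (destruct Hl as [<-|[<-|Hl]]; simpl; tauto).
      destruct (Hmax l Hl') as [->|Hlm]; [exact Hgt|exact (lt_trans _ _ _ Hlm Hgt)].
Qed.

Lemma gen_open_subbase (T : Type) (S : (T -> Prop) -> Prop) (V : T -> Prop) :
  S V -> gen_open S V.
Proof.
  intros HS x Hx; exists [V].
  split; [intros V' [<-|[]]; exact HS|].
  split; [intros V' [<-|[]]; exact Hx|].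
  intros y H; apply H; now left.
Qed.

Lemma gen_open_inter (T : Type) (S : (T -> Prop) -> Prop) (l : list (T -> Prop)) :
  (forall V, In V l -> S V) -> gen_open S (fun y => forall V, In V l -> V y).
Proof. intros HS x Hx; exists l; auto. Qed.

Lemma compact_union (T I : Type) (opn : (T -> Prop) -> Prop) (A : I -> T -> Prop)
  (D : list I) :
  (forall d, In d D -> compact opn (A d)) ->
  compact opn (fun z => exists d, In d D /\ A d z).
Proof.
  induction D as [|d D IH]; intros HA Cov HCov Hcov.
  - exists nil; split; [intros _ []|]. intros z [d [[] _]].
  - destruct (HA d (or_introl eq_refl) Cov HCov) as [ls1 [Hls1 Hcov1]].
    { intros z Hz; apply Hcov; exists d; split; [now left|exact Hz]. }
    destruct (IH (fun d' Hd' => HA d' (or_intror Hd')) Cov HCov) as [ls2 [Hls2 Hcov2]].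
    { intros z [d' [Hd' Hz]]; apply Hcov; exists d'; split; [now right|exact Hz]. }
    exists (ls1 ++ ls2); split.
    + intros U HU; apply in_app_or in HU; destruct HU; auto.
    + intros z [d' [[<-|Hd'] Hz]].
      * destruct (Hcov1 z Hz) as [U [HU Uz]]; exists U; split; [apply in_or_app|]; auto.
      * destruct (Hcov2 z (ex_intro _ d' (conj Hd' Hz))) as [U [HU Uz]].
        exists U; split; [apply in_or_app|]; auto.
Qed.

Lemma isolated_in_ext (T : Type) (opn : (T -> Prop) -> Prop) (Y Y' : T -> Prop) x :
  (forall y, Y y <-> Y' y) -> isolated_in opn Y x -> isolated_in opn Y' x.
Proof.
  intros HY [Hx [U [HU [Ux HUy]]]]; split; [now apply HY|].
  exists U; repeat split; auto. intros y Uy Hy; apply HUy; [exact Uy|now apply HY].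
Qed.

Lemma CB_levels_unique (T L : Type) (opn : (T -> Prop) -> Prop) (lt : L -> L -> Prop)
  (I J : L -> T -> Prop) :
  well_founded lt -> CB_levels opn lt I -> CB_levels opn lt J ->
  forall b x, I b x <-> J b x.
Proof.
  intros Hwf HI HJ b; induction b as [b IH] using (well_founded_ind Hwf); intros x.
  assert (Hrest : forall y, (~ exists a, lt a b /\ I a y) <-> (~ exists a, lt a b /\ J a y)).
  { intros y; split; intros Hn [a [Hab Ha]]; apply Hn; exists a; split; auto;
      now apply (IH a Hab y). }
  rewrite (HI b x), (HJ b x); split; apply isolated_in_ext; intro y; [|symmetry]; apply Hrest.
Qed.

Lemma fiber_same_card (K L : Type) (P : K * L -> Prop) (b : L) :
  (forall x, P x <-> snd x = b) -> same_card {x : K * L | P x} K.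
Proof.
  intros HP.
  exists (fun s => fst (proj1_sig s)),
         (fun k => exist P (k, b) (proj2 (HP (k, b)) eq_refl)).
  split; [|reflexivity].
  intros [[k b'] Hs]; simpl.
  assert (Hb : b' = b) by exact (proj1 (HP (k, b')) Hs). subst b'.
  f_equal; apply proof_irrelevance.
Qed.

Section AdmissibleTopology.

Variables (K L : Type) (lt : L -> L -> Prop) (R : K * L -> K * L -> Prop).

Hypothesis lt_wf : well_founded lt.
Hypothesis lt_trans : forall x y z, lt x y -> lt y z -> lt x z.
Hypothesis lt_total : forall x y, lt x y \/ x = y \/ lt y x.

Hypothesis R_refl : forall x, R x x.
Hypothesis R_trans : forall x y z, R x y -> R y z -> R x z.
Hypothesis R_antisym : forall x y, R x y -> R y x -> x = y.
Hypothesis R_level : forall x y, R x y -> x <> y -> lt (snd x) (snd y).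
Hypothesis R_many_below : forall (b : L) (a' : K) (b' : L), lt b b' ->
  forall l : list K, exists a : K, ~ In a l /\ R (a, b) (a', b').
Hypothesis R_meets_finite : forall x0 x1, exists bs : list (K * L),
  (forall y, In y bs -> R y x0 /\ R y x1) /\
  (forall z, R z x0 -> R z x1 -> exists y, In y bs /\ R z y).

Local Notation opn := (gen_open (adm_subbase R)).

Definition strictly_below (D : list (K * L)) (x : K * L) : Prop :=
  forall d, In d D -> R d x /\ d <> x.

Definition avoids (z : K * L) (D : list (K * L)) : Prop :=
  forall d, In d D -> ~ R z d.

Lemma cone_subbase x : adm_subbase R (fun p => R p x).
Proof. exists (fst x), (snd x); left; now destruct x. Qed.

Lemma cocone_subbase x : adm_subbase R (fun p => ~ R p x).
Proof. exists (fst x), (snd x); right; now destruct x. Qed.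

Lemma cone_open x : opn (fun p => R p x).
Proof. apply gen_open_subbase, cone_subbase. Qed.

Lemma cocone_open x : opn (fun p => ~ R p x).
Proof. apply gen_open_subbase, cocone_subbase. Qed.

Lemma meets_cover_avoiding z D :
  avoids z D ->
  exists D', strictly_below D' z /\
    forall w, R w z -> forall d, In d D -> R w d -> exists y, In y D' /\ R w y.
Proof.
  induction D as [|d0 D IH]; intros Hz.
  - exists nil; split; [intros y []|]. intros w _ d [].
  - destruct (IH (fun d Hd => Hz d (or_intror Hd))) as [D' [HD' Hcov]].
    destruct (R_meets_finite z d0) as [bs [Hbs Hmeet]].
    exists (bs ++ D'); split.
    + intros y Hy; apply in_app_or in Hy; destruct Hy as [Hy|Hy]; [|exact (HD' y Hy)].
      destruct (Hbs y Hy) as [Hyz Hyd]; split; [exact Hyz|].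
      intros ->; exact (Hz d0 (or_introl eq_refl) Hyd).
    + intros w Hw d [<-|Hd] Hwd.
      * destruct (Hmeet w Hw Hwd) as [y [Hy Hwy]]; exists y; split; [apply in_or_app|]; auto.
      * destruct (Hcov w Hw d Hd Hwd) as [y [Hy Hwy]]; exists y; split; [apply in_or_app|]; auto.
Qed.

Lemma basic_nbhd_contains_cone_diff x (l : list (K * L -> Prop)) :
  (forall V, In V l -> adm_subbase R V) -> (forall V, In V l -> V x) ->
  exists D, strictly_below D x /\
    forall w, R w x -> avoids w D -> forall V, In V l -> V w.
Proof.
  induction l as [|V l IH]; intros Hsub Hx.
  - exists nil; split; [intros d []|]. intros w _ _ V [].
  - destruct (IH (fun V' HV' => Hsub V' (or_intror HV')) (fun V' HV' => Hx V' (or_intror HV')))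
      as [D [HD Hcone]].
    destruct (Hsub V (or_introl eq_refl)) as [a0 [b0 [->| ->]]].
    + exists D; split; [exact HD|].
      intros w Hw Hav V' [<-|HV']; [|exact (Hcone w Hw Hav V' HV')].
      exact (R_trans Hw (Hx _ (or_introl eq_refl))).
    + assert (Hxa : ~ R x (a0, b0)) by exact (Hx _ (or_introl eq_refl)).
      destruct (R_meets_finite x (a0, b0)) as [bs [Hbs Hmeet]].
      exists (bs ++ D); split.
      * intros d Hd; apply in_app_or in Hd; destruct Hd as [Hd|Hd]; [|exact (HD d Hd)].
        destruct (Hbs d Hd) as [Hdx Hda]; split; [exact Hdx|]. intros ->; exact (Hxa Hda).
      * intros w Hw Hav V' [<-|HV'].
        -- intro Hwa; destruct (Hmeet w Hw Hwa) as [y [Hy Hwy]].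
           exact (Hav y (in_or_app _ _ _ (or_introl Hy)) Hwy).
        -- apply (Hcone w Hw); [|exact HV'].
           intros d Hd; apply Hav, in_or_app; now right.
Qed.

(* (B) is applied with the first coordinates of D excluded, at a level [m] no
   lower than any point of D, so the new point can only be below a point of D
   by lying strictly under it, which the level forbids. *)
Lemma avoiding_point_between x b D :
  lt b (snd x) -> strictly_below D x ->
  exists z, R z x /\ avoids z D /\ (snd z = b \/ lt b (snd z)) /\ lt (snd z) (snd x).
Proof.
  intros Hb HD.
  destruct (list_max_total lt lt_trans lt_total b (map snd D)) as [m [Hm Hmax]].
  assert (Hmx : lt m (snd x)).
  { destruct Hm as [<-|Hm]; [exact Hb|].
    apply in_map_iff in Hm; destruct Hm as [d [<- Hd]].
    destruct (HD d Hd) as [Hdx Hne]; exact (R_level Hdx Hne). }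
  destruct (R_many_below (fst x) Hmx (map fst D)) as [a [Ha Hax]].
  rewrite <- surjective_pairing in Hax.
  exists (a, m); split; [exact Hax|]; split.
  - intros d Hd Hr.
    destruct (classic ((a, m) = d)) as [<-|Hne]; [exact (Ha (in_map fst D _ Hd))|].
    pose proof (R_level Hr Hne) as Hmd; simpl in Hmd.
    destruct (Hmax (snd d) (or_intror (in_map snd D d Hd))) as [Heq|Hdm].
    + rewrite Heq in Hmd; exact (well_founded_irrefl lt_wf _ Hmd).
    + exact (well_founded_irrefl lt_wf _ (lt_trans Hmd Hdm)).
  - split; [|exact Hmx].
    destruct (Hmax b (or_introl eq_refl)) as [->|Hbm]; [now left|now right].
Qed.

Lemma avoiding_point_at_level x b D :
  lt b (snd x) -> strictly_below D x ->
  exists y, snd y = b /\ R y x /\ avoids y D.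
Proof.
  remember (snd x) as bx eqn:Ebx; revert x Ebx b D.
  induction bx as [bx IH] using (well_founded_ind lt_wf); intros x -> b D Hb HD.
  destruct (avoiding_point_between Hb HD) as [z [Hzx [Hzav [[Hzb|Hbz] Hzlev]]]].
  - exists z; auto.
  - destruct (meets_cover_avoiding Hzav) as [D' [HD' Hcov]].
    destruct (IH (snd z) Hzlev z eq_refl b D' Hbz HD') as [y [Hyb [Hyz Hyav]]].
    exists y; split; [exact Hyb|]; split; [exact (R_trans Hyz Hzx)|].
    intros d Hd Hyd; destruct (Hcov y Hyz d Hd Hyd) as [y' [Hy' Hyy']].
    exact (Hyav y' Hy' Hyy').
Qed.

Lemma open_meets_lower_levels x b U :
  lt b (snd x) -> opn U -> U x -> exists y, U y /\ snd y = b.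
Proof.
  intros Hb HU Ux.
  destruct (HU x Ux) as [l [Hsub [Hlx HlU]]].
  destruct (basic_nbhd_contains_cone_diff l Hsub Hlx) as [D [HD Hcone]].
  destruct (avoiding_point_at_level Hb HD) as [y [Hyb [Hyx Hyav]]].
  exists y; split; [apply HlU; exact (Hcone y Hyx Hyav)|exact Hyb].
Qed.

Lemma cone_compact x : compact opn (fun p => R p x).
Proof.
  remember (snd x) as bx eqn:Ebx; revert x Ebx.
  induction bx as [bx IH] using (well_founded_ind lt_wf); intros x -> Cov HCov Hcov.
  destruct (Hcov x (R_refl x)) as [U [HU Ux]].
  destruct (HCov U HU x Ux) as [l [Hsub [Hlx HlU]]].
  destruct (basic_nbhd_contains_cone_diff l Hsub Hlx) as [D [HD Hcone]].
  assert (Hlower : compact opn (fun z => exists d, In d D /\ R z d)).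
  { apply compact_union; intros d Hd.
    destruct (HD d Hd) as [Hdx Hne]; exact (IH _ (R_level Hdx Hne) d eq_refl). }
  destruct (Hlower Cov HCov) as [ls [Hls Hcovls]].
  { intros z [d [Hd Hzd]]; apply Hcov; exact (R_trans Hzd (proj1 (HD d Hd))). }
  exists (U :: ls); split; [intros U' [<-|HU']; auto|].
  intros z Hz; destruct (classic (exists d, In d D /\ R z d)) as [Hlow|Hnlow].
  - destruct (Hcovls z Hlow) as [U' [HU' Uz]]; exists U'; split; [now right|exact Uz].
  - exists U; split; [now left|]; apply HlU, (Hcone z Hz).
    intros d Hd Hzd; apply Hnlow; exists d; auto.
Qed.

Lemma admissible_hausdorff : hausdorff opn.
Proof.
  intros x y Hxy.
  destruct (classic (R x y)) as [Hxy'|Hnxy].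
  - exists (fun p => R p x), (fun p => ~ R p x).
    repeat split; [apply cone_open|apply cocone_open|apply R_refl| |].
    + intro Hyx; exact (Hxy (R_antisym Hxy' Hyx)).
    + intros z [H1 H2]; exact (H2 H1).
  - destruct (classic (R y x)) as [Hyx|Hnyx].
    + exists (fun p => ~ R p y), (fun p => R p y).
      repeat split; [apply cocone_open|apply cone_open|exact Hnxy|apply R_refl|].
      intros z [H1 H2]; exact (H1 H2).
    + (* C(x) minus the finitely many maximal common lower bounds of x and y *)
      destruct (R_meets_finite x y) as [bs [Hbs Hmeet]].
      set (Ux := (fun p => R p x) :: map (fun d p => ~ R p d) bs).
      exists (fun p => forall V, In V Ux -> V p), (fun p => R p y).
      repeat split; [|apply cone_open| |apply R_refl|].
      * apply gen_open_inter; intros V [<-|HV]; [apply cone_subbase|].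
        apply in_map_iff in HV; destruct HV as [d [<- _]]; apply cocone_subbase.
      * intros V [<-|HV]; [apply R_refl|].
        apply in_map_iff in HV; destruct HV as [d [<- Hd]]; intro Hxd.
        destruct (Hbs d Hd) as [Hdx Hdy].
        rewrite (R_antisym Hxd Hdx) in Hnxy; exact (Hnxy Hdy).
      * intros z [Hz Hzy].
        destruct (Hmeet z (Hz _ (or_introl eq_refl)) Hzy) as [d [Hd Hzd]].
        apply (Hz (fun p => ~ R p d)); [right; apply in_map_iff; exists d; auto|exact Hzd].
Qed.

Lemma level_CB_levels : CB_levels opn lt (fun b x => snd x = b).
Proof.
  intros b x; split.
  - intros Hx; split.
    + intros [a [Hab Ha]]; rewrite Hx in Ha; subst a; exact (well_founded_irrefl lt_wf _ Hab).
    + exists (fun p => R p x); repeat split; [apply cone_open|apply R_refl|].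
      intros y Hyx Hy; apply NNPP; intro Hne; apply Hy.
      exists (snd y); split; [rewrite <- Hx; exact (R_level Hyx Hne)|reflexivity].
  - intros [Hx [U [HU [Ux Hiso]]]].
    destruct (lt_total (snd x) b) as [Hlt|[Heq|Hgt]]; [|exact Heq|].
    + exfalso; apply Hx; exists (snd x); auto.
    + exfalso; destruct (@open_meets_lower_levels x b U Hgt HU Ux) as [y [Uy Hyb]].
      assert (y = x) as ->.
      { apply Hiso; [exact Uy|]; intros [a [Hab Ha]].
        rewrite Hyb in Ha; subst a; exact (well_founded_irrefl lt_wf _ Hab). }
      rewrite Hyb in Hgt; exact (well_founded_irrefl lt_wf _ Hgt).
Qed.

End AdmissibleTopology.

Theorem mainTheorem2 (K L : Type) (lt : L -> L -> Prop)
  (R : (K * L) -> (K * L) -> Prop) :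
  infinite_type K ->
  is_kappa_pp K lt ->
  admissible lt R ->
  let opn := gen_open (adm_subbase R) in
  hausdorff opn /\
  (forall a b, compact opn (Cdown R a b)) /\
  locally_compact opn /\
  (exists I, CB_levels opn lt I) /\
  (forall I, CB_levels opn lt I ->
     (forall b x, I b x <-> snd x = b) /\
     (* scattered: X is the union of the levels indexed by kappa^{++} *)
     (forall x, exists b, I b x) /\
     (* height exactly kappa^{++}: every level below kappa^{++} is nonempty *)
     (forall b, exists x, I b x) /\
     (* cardinal sequence constantly kappa *)
     (forall b, same_card {x : K * L | I b x} K)).
Proof.
  intros [k _] [[lt_wf [lt_trans lt_total]] _]
    [R_refl [R_trans [R_antisym [R_level [R_many_below R_meets_finite]]]]] opn.
  pose proof (cone_compact lt_wf R_refl R_trans R_level R_meets_finite) as Hcompact.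
  pose proof (level_CB_levels R lt_wf lt_trans lt_total R_refl R_trans R_level
                R_many_below R_meets_finite) as Hlevels.
  split; [exact (admissible_hausdorff R R_refl R_antisym R_meets_finite)|].
  split; [intros a b; exact (Hcompact (a, b))|].
  split; [intros x; exists (fun p => R p x), (fun p => R p x);
          split; [exact (cone_open R x)|]; split; [apply R_refl|];
          split; [auto|exact (Hcompact x)]|].
  split; [now exists (fun b x => snd x = b)|].
  intros I HI.
  assert (Hlev : forall b x, I b x <-> snd x = b) by exact (CB_levels_unique lt_wf HI Hlevels).
  split; [exact Hlev|].
  split; [intros x; exists (snd x); now apply Hlev|].
  split; [intros b; exists (k 0, b); now apply Hlev|].
  intros b; exact (fiber_same_card (I b) (Hlev b)).
Qed.
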